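(* Let $\mathbf{H}$ be the gap-insertion Hopf algebra of noncrossing partitions, $\mathbf{B}$ the block-substitution bialgebra of noncrossing partitions, and $\psi_\prec$ the unique element of $\mathbf{H}^*$ with $\psi_\prec=\varepsilon+e\prec\psi_\prec$. Let $\kappa$ be an infinitesimal character of $\mathbf{H}$ and $K$ the character of $\mathbf{B}$ with $K(P)=\kappa(P)$ for every nonempty noncrossing partition $P$. Then for every character $\phi$ of $\mathbf{H}$, $$\phi=\varepsilon+\kappa\prec\phi\iff\phi=\psi_\prec\curvearrowleft K.$$ In other words, the unique solution $\mathcal{E}_\prec(\kappa)$ of $\phi=\varepsilon+\kappa\prec\phi$ equals $\psi_\prec\curvearrowleft K$.
   Context: Noncrossing partitions of $[n]$: no $a<c<b<d$ with $a,b$ in one block and $c,d$ in another; partitions of finite linearly ordered sets are identified with partitions of $[n]$ via the order-preserving bijection; $P_{|X}$ is the induced partition. $\operatorname{Conv}(X)=\{\min X,\dots,\max X\}$; on blocks $\pi\to\rho$ iff $\operatorname{Conv}(\pi)\cap\rho\ne\emptyset$ (transitively closed). Upperset $U$: ($\pi\in U,\pi\to\rho$)$\Rightarrow\rho\in U$; lowerset $L$: ($\pi\in L,\sigma\to\pi$)$\Rightarrow\sigma\in L$. A cut $(L,U)$ splits the blocks into a lowerset $L$ and its complement $U$; $L$ is identified with the restriction of $P$ to the union of its blocks, elements $x_1<\dots<x_k$; $D_0=\{y<x_1\}$, $D_i=\{x_i<y<x_{i+1}\}$, $D_k=\{y>x_k\}$, $U_i=P_{|D_i}$, $\overline U$ =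 ordered product of nonempty $U_i$. $\mathbf{H}$: free associative unital algebra on nonempty noncrossing partitions; basis of multipartitions $P_1\cdots P_r$ viewed as partitions of $[n_1+\dots+n_r]$ by shifting; cuts of multipartitions are tuples of cuts, $L=L_1\cdots L_r$, $\overline U=\overline{U_1}\cdots\overline{U_r}$. Counit $\varepsilon$ ($1$ on $\mathbf 1$, $0$ on nonempty monomials). For nonempty $P$, $\Delta_\prec(P)=\sum_{\text{cuts},1\in L}L\otimes\overline U$. For $f,g\in\mathbf H^*$, $(f\prec g)(\mathbf 1)=0$ and $(f\prec g)(x)=(f\otimes g)\Delta_\prec(x)$ on nonempty multipartitions. Characters: unital algebra maps to $\mathbb K$; infinitesimal characters: linear forms vanishing on $\mathbf 1$ and on products of two nonempty monomials. $e$ is the infinitesimal character of $\mathbf H$ with $e(P)=1$ if $P$ is a noncrossing partition with one block and $e(P)=0$ for other noncrossing partitions. $\mathbf{B}$: free commutative unital algebra on nonempty noncrossing partitions; for noncrossing $P\leq Q$ (refinement), $Q=\{\tau_1,\dots,\tau_l\}$, $P/Q=P_{|\tau_1}\cdots P_{|\tau_l}$. Coaction $\rho:\mathbf H\to\mathbf H\otimes\mathbf B$, the algebra morphism with $\rho(P)=\sum_{Q\geq P\text{ noncrossing}}Q\otimes P/Q$; for $\alpha\in\mathbf H^*$ and a character $\phi$ of $\mathbf B$, $\alpha\curvearrowleft\phi=(\alpha\otimes\phi)\circ\rho$. *)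

From mathcomp Require Import all_boot all_order all_algebra.
Set Implicit Arguments. Unset Strict Implicit. Unset Printing Implicit Defensive.
Import GRing.Theory.

Definition noncrossing {n : nat} (P : {set {set 'I_n}}) : bool :=
  [forall pi in P, forall rho in P, (pi != rho) ==>
     ~~ [exists a : 'I_n, exists b : 'I_n, exists c : 'I_n, exists d : 'I_n,
          [&& a \in pi, b \in pi, c \in rho, d \in rho,
              (a < c)%N, (c < b)%N & (b < d)%N]]].

Definition ncpart {n : nat} (P : {set {set 'I_n}}) : bool :=
  partition P [set: 'I_n] && noncrossing P.

Definition Conv {n : nat} (X : {set 'I_n}) : {set 'I_n} :=
  [set x : 'I_n | [exists a in X, exists b in X, (a <= x)%N && (x <= b)%N]].

Definition arrow0 {n : nat} (P : {set {set 'I_n}}) : rel {set 'I_n} :=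
  fun pi rho => [&& pi \in P, rho \in P & Conv pi :&: rho != set0].
(* its transitive closure (the base relation is reflexive on blocks) *)
Definition arrow {n : nat} (P : {set {set 'I_n}}) : rel {set 'I_n} :=
  connect (arrow0 P).

Definition lowerset {n : nat} (P L : {set {set 'I_n}}) : bool :=
  (L \subset P) &&
  [forall pi in L, forall sigma in P, arrow P sigma pi ==> (sigma \in L)].

Definition stdpos {n : nat} (X : {set 'I_n}) (x : 'I_n) : nat :=
  #|[set y in X | (y < x)%N]|.

(* induced partition P_{|X}, transported to 'I_#|X| *)
Definition restr {n : nat} (P : {set {set 'I_n}}) (X : {set 'I_n})
  : {set {set 'I_#|X| }} :=
  [set [set i : 'I_#|X| | [exists x in pi :&: X, stdpos X x == i]]
    | pi in P & pi :&: X != set0].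

Definition Raw := {m : nat & {set {set 'I_m}}}.
Definition isNCP (p : Raw) : bool := (0 < tag p)%N && ncpart (tagged p).
Definition NCP := {p : Raw | isNCP p}.
Definition ncp_n (p : NCP) : nat := tag (val p).
Definition ncp_P (p : NCP) : {set {set 'I_(ncp_n p)}} := tagged (val p).

(* packs a partition as a nonempty NC partition; None if empty
   (or not noncrossing, which never happens below) *)
Definition toNCP {m : nat} (P : {set {set 'I_m}}) : option NCP :=
  insub (Tagged (fun k => {set {set 'I_k}}) P).
Definition seq_of_opt (o : option NCP) : seq NCP :=
  if o is Some q then [:: q] else [::].

(* Monomials of H (words of nonempty NC partitions) are  seq NCP;
   an element of H^* is a function  seq NCP -> K  (its values on the basis). *)

Definition unionL {n : nat} (L : {set {set 'I_n}}) : {set 'I_n} :=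
  \bigcup_(pi in L) pi.
(* gap D_i of X (i = 0..#|X|) *)
Definition gap {n : nat} (X : {set 'I_n}) (i : nat) : {set 'I_n} :=
  [set y : 'I_n | (y \notin X) && (stdpos X y == i)].

Definition cut_L {n : nat} (P L : {set {set 'I_n}}) : seq NCP :=
  seq_of_opt (toNCP (restr P (unionL L))).
Definition cut_Ubar {n : nat} (P L : {set {set 'I_n}}) : seq NCP :=
  pmap (fun i => toNCP (restr P (gap (unionL L) i))) (iota 0 (#|unionL L|).+1).

Definition cuts (p : NCP) : seq (seq NCP * seq NCP) :=
  [seq (cut_L (ncp_P p) L, cut_Ubar (ncp_P p) L)
    | L <- enum [set L : {set {set 'I_(ncp_n p)}} | lowerset (ncp_P p) L]].
Definition cuts1 (p : NCP) : seq (seq NCP * seq NCP) :=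
  [seq (cut_L (ncp_P p) L, cut_Ubar (ncp_P p) L)
    | L <- enum [set L : {set {set 'I_(ncp_n p)}} | lowerset (ncp_P p) L &&
               [exists pi in L, exists x in pi, nat_of_ord x == 0%N]]].

Fixpoint allcuts (w : seq NCP) : seq (seq NCP * seq NCP) :=
  match w with
  | [::] => [:: ([::], [::])]
  | p :: w' => [seq (c.1 ++ d.1, c.2 ++ d.2) | c <- cuts p, d <- allcuts w']
  end.

Section Dual.
Variable R : fieldType.
Local Open Scope ring_scope.

Definition eps (w : seq NCP) : R := if w is [::] then 1 else 0.

Definition einf (w : seq NCP) : R :=
  match w with [:: p] => (#|ncp_P p| == 1%N)%:R | _ => 0 end.

(* (f < g)(1) = 0, (f < g)(x) = (f (x) g) Delta_<(x) *)
Definition halfprec (f g : seq NCP -> R) (w : seq NCP) : R :=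
  match w with
  | [::] => 0
  | p :: w' => \sum_(c <- cuts1 p) \sum_(d <- allcuts w')
                  f (c.1 ++ d.1) * g (c.2 ++ d.2)
  end.

Definition is_char (f : seq NCP -> R) : Prop :=
  f [::] = 1 /\ forall u v, f (u ++ v) = f u * f v.

Definition is_infchar (f : seq NCP -> R) : Prop :=
  f [::] = 0 /\ forall u v, (0 < size u)%N -> (0 < size v)%N -> f (u ++ v) = 0.

Definition refines {n : nat} (P Q : {set {set 'I_n}}) : bool :=
  [forall pi in P, exists tau in Q, pi \subset tau].

(* P/Q as a monomial of B (a commutative monomial, listed in some order) *)
Definition quotNC {n : nat} (P Q : {set {set 'I_n}}) : seq NCP :=
  pmap (fun tau => toNCP (restr P tau)) (enum Q).

Definition coarsen (p : NCP) : seq (NCP * seq NCP) :=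
  pmap (fun Q => omap (fun q => (q, quotNC (ncp_P p) Q)) (toNCP Q))
    (enum [set Q : {set {set 'I_(ncp_n p)}} | ncpart Q && refines (ncp_P p) Q]).

Fixpoint allcoarse (w : seq NCP) : seq (seq NCP * seq NCP) :=
  match w with
  | [::] => [:: ([::], [::])]
  | p :: w' => [seq (c.1 :: d.1, c.2 ++ d.2) | c <- coarsen p, d <- allcoarse w']
  end.

(* alpha <~ Phi = (alpha (x) Phi) o rho, Phi a character of B given on monomials *)
Definition coact (alpha Phi : seq NCP -> R) (w : seq NCP) : R :=
  \sum_(c <- allcoarse w) alpha c.1 * Phi c.2.

Definition charB (kappa : seq NCP -> R) (m : seq NCP) : R :=
  \prod_(q <- m) kappa [:: q].

End Dual.

From mathcomp Require Import all_boot all_order all_algebra.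
Set Implicit Arguments. Unset Strict Implicit. Unset Printing Implicit Defensive.
Import GRing.Theory.

(* By induction on the number of points, psi_prec is constantly 1: in
   (e < psi_prec)(P) only the cut whose lower part is the single block through
   the first point contributes.  Hence psi_prec <~ K is the multiplicative extension
   of Z(P) = sum over noncrossing Q >= P of prod_{tau in Q} kappa(P|tau).  A
   noncrossing coarsening Q of P is determined by its block through the first point,
   which is the union of a lowerset L of blocks containing the first block, together
   with noncrossing coarsenings of the restrictions of P to the gaps D_i of L.  This
   gives Z(P) = sum over cuts with 1 in L of kappa(L) prod_i Z(U_i), i.e. psi_prec <~ K
   solves phi = eps + kappa < phi.  That equation has a unique solution, because
   (kappa < phi)(w) only involves values of phi on words with fewer points. *)

Lemma card_ord_ltn N k : k <= N -> #|[set j : 'I_N | j < k]| = k.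
Proof.
move=> kN.
have -> : [set j : 'I_N | j < k] = widen_ord kN @: [set: 'I_k].
  apply/setP => j; rewrite !inE; apply/idP/imsetP => [jk|[j' _ ->]]; last exact: ltn_ord j'.
  by exists (Ordinal jk) => //; apply: val_inj.
rewrite card_imset ?cardsT ?card_ord //.
by move=> a b /(congr1 val) /= ab; apply: val_inj.
Qed.

Lemma card_le_ord n (X : {set 'I_n}) : #|X| <= n.
Proof. by have := max_card (mem X); rewrite card_ord. Qed.

Lemma cardsC_ord n (X : {set 'I_n}) : #|~: X| = n - #|X|.
Proof. by apply/eqP; rewrite -(eqn_add2l #|X|) cardsC card_ord subnKC ?card_le_ord. Qed.

Lemma card_inj_nat (T1 T2 : finType) (A : {set T1}) (B : {set T2})
  (f : T1 -> nat) (g : T2 -> nat) :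
  {in A &, injective f} -> {in B &, injective g} ->
  (forall k, (exists2 a, a \in A & f a = k) <-> (exists2 b, b \in B & g b = k)) ->
  #|A| = #|B|.
Proof.
move=> fi gi h; rewrite !cardE -(size_map f) -(size_map g).
apply: perm_size; apply: uniq_perm.
- by rewrite map_inj_in_uniq ?enum_uniq // => x y; rewrite !mem_enum; apply: fi.
- by rewrite map_inj_in_uniq ?enum_uniq // => x y; rewrite !mem_enum; apply: gi.
move=> k; apply/mapP/mapP => [[a]|[b]]; rewrite mem_enum => xA ->.
  by have [b bB e] := (h (f a)).1 (ex_intro2 _ _ a xA erefl); exists b; rewrite ?mem_enum.
by have [a aA e] := (h (g b)).2 (ex_intro2 _ _ b xA erefl); exists a; rewrite ?mem_enum.
Qed.

Section Standardization.
Variable n : nat.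
Implicit Types (X t : {set 'I_n}) (x y z a b c : 'I_n).

Lemma stdpos_le_card X x : stdpos X x <= #|X|.
Proof. by apply: subset_leq_card; apply/subsetP => y; rewrite inE => /andP[]. Qed.

Lemma stdpos_lt_card X x : x \in X -> stdpos X x < #|X|.
Proof.
move=> xX; apply: proper_card; apply/properP; split.
  by apply/subsetP => y; rewrite inE => /andP[].
by exists x => //; rewrite inE ltnn andbF.
Qed.

Lemma leq_stdpos X x y : x <= y -> stdpos X x <= stdpos X y.
Proof.
move=> xy; apply: subset_leq_card; apply/subsetP => z; rewrite !inE => /andP[-> /=].
by move=> zx; apply: leq_trans zx xy.
Qed.

Lemma ltn_stdpos X x y : x \in X -> x < y -> stdpos X x < stdpos X y.
Proof.
move=> xX xy; apply: proper_card; apply/properP; split.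
  apply/subsetP => z; rewrite !inE => /andP[-> /=] zx; exact: ltn_trans zx xy.
by exists x; rewrite !inE ?xX ?xy // ltnn andbF.
Qed.

Lemma ltn_stdposE X x y : x \in X -> y \in X -> (stdpos X x < stdpos X y) = (x < y).
Proof.
move=> xX yX; apply/idP/idP; last exact: ltn_stdpos.
by move=> h; rewrite ltnNge; apply/negP => /(leq_stdpos X); rewrite leqNgt h.
Qed.

Lemma stdpos_inj X x y : x \in X -> y \in X -> stdpos X x = stdpos X y -> x = y.
Proof.
move=> xX yX e; apply: val_inj => /=.
by case: (ltngtP x y) => // h; move: h;
  rewrite -?(ltn_stdposE xX yX) -?(ltn_stdposE yX xX) e ltnn.
Qed.

Lemma stdpos_between X y z : y < z -> stdpos X y < stdpos X z ->
  exists2 x, x \in X & (y <= x) && (x < z).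
Proof.
move=> yz lt.
have: ~~ ([set w in X | w < z] \subset [set w in X | w < y]).
  by apply/negP => /subset_leq_card; rewrite leqNgt lt.
case/subsetPn => x; rewrite !inE => /andP[xX xz] /nandP[/negP//|xy].
by exists x => //; rewrite xz leqNgt xy.
Qed.

Lemma stdpos_onto X i : i < #|X| -> exists2 x, x \in X & stdpos X x = i.
Proof.
move=> iX.
pose f x : 'I_n.+1 := inord (stdpos X x).
have fE x : nat_of_ord (f x) = stdpos X x.
  by rewrite /f inordK // ltnS (leq_trans (stdpos_le_card X x)) ?card_le_ord.
have injf : {in X &, injective f}.
  by move=> a b aX bX /(congr1 (@nat_of_ord _)); rewrite !fE; apply: stdpos_inj.
have sub : f @: X \subset [set j : 'I_n.+1 | j < #|X|].
  by apply/subsetP => j /imsetP[x xX ->]; rewrite inE fE stdpos_lt_card.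
have in_ord : i < n.+1 by rewrite ltnS (leq_trans _ (card_le_ord X)) // ltnW.
have : f @: X = [set j : 'I_n.+1 | j < #|X|].
  by apply/eqP; rewrite eqEcard sub /= card_in_imset // card_ord_ltn // leqW ?card_le_ord.
move/setP/(_ (inord i)); rewrite inE inordK // iX.
by case/imsetP => x xX /(congr1 (@nat_of_ord _)); rewrite fE inordK // => e; exists x.
Qed.

Lemma stdpos_setT x : stdpos [set: 'I_n] x = x.
Proof.
rewrite /stdpos -[RHS](card_ord_ltn (ltnW (ltn_ord x))).
by apply: eq_card => y; rewrite !inE.
Qed.

Lemma in_gap X i y : (y \in gap X i) = (y \notin X) && (stdpos X y == i).
Proof. by rewrite inE. Qed.

Lemma mem_gap_stdpos X y : y \notin X -> y \in gap X (stdpos X y).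
Proof. by move=> yX; rewrite in_gap yX eqxx. Qed.

Lemma gap_notin X i y : y \in gap X i -> y \notin X.
Proof. by rewrite in_gap => /andP[]. Qed.

Lemma gap_uniq X i j y : y \in gap X i -> y \in gap X j -> i = j.
Proof. by rewrite !in_gap => /andP[_ /eqP <-] /andP[_ /eqP <-]. Qed.

Lemma gap_gt_card X i : #|X| < i -> gap X i = set0.
Proof.
move=> lt; apply/setP => y; rewrite in_gap inE; apply/negbTE.
rewrite negb_and; apply/orP; right; apply/eqP => e.
by move: (stdpos_le_card X y); rewrite e leqNgt lt.
Qed.

Lemma gap_set0 : gap (set0 : {set 'I_n}) 0 = setT.
Proof.
apply/setP => y; rewrite in_gap !inE /= /stdpos; apply/eqP/eqP.
by rewrite cards_eq0; apply/eqP/setP => z; rewrite !inE.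
Qed.

Lemma gap_between X y z : y \notin X -> y < z -> stdpos X y != stdpos X z ->
  exists2 x, x \in X & (y < x) && (x < z).
Proof.
move=> yX yz ne.
have lt : stdpos X y < stdpos X z by rewrite ltn_neqAle ne leq_stdpos // ltnW.
have [x xX /andP[yx xz]] := stdpos_between yz lt.
exists x => //; rewrite xz andbT ltn_neqAle yx andbT.
by apply: contraNneq yX => e; rewrite (val_inj e).
Qed.

Lemma gap_nothing_between X i y z x : y \in gap X i -> z \in gap X i -> x \in X ->
  y < x -> x < z -> False.
Proof.
rewrite !in_gap => /andP[_ /eqP yi] /andP[_ /eqP zi] xX yx xz.
have := leq_ltn_trans (leq_stdpos X (ltnW yx)) (ltn_stdpos xX xz).
by rewrite yi zi ltnn.
Qed.

Lemma gap_between_gap X i j a b c : a \in gap X i -> b \in gap X i -> c \in gap X j ->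
  a < c -> c < b -> i = j.
Proof.
rewrite !in_gap => /andP[_ /eqP ai] /andP[_ /eqP bi] /andP[_ /eqP cj] ac cb.
have h1 := leq_stdpos X (ltnW ac); have h2 := leq_stdpos X (ltnW cb).
by apply/eqP; rewrite -ai -cj eqn_leq h1 /= (leq_trans h2) // bi ai.
Qed.

Lemma sub_gap X t y : y \in t -> (forall z, z \in t -> z \notin X) ->
  (forall a b x, a \in t -> b \in t -> x \in X -> a < x -> x < b -> False) ->
  t \subset gap X (stdpos X y).
Proof.
move=> yt tX h; apply/subsetP => z zt; rewrite in_gap tX //=.
apply/negPn/negP => ne.
case: (ltngtP y z) => [yz|zy|e].
- rewrite eq_sym in ne.
  have [x xX /andP[yx xz]] := gap_between (tX y yt) yz ne.
  exact: (h y z x).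
- have [x xX /andP[zx xy]] := gap_between (tX z zt) zy ne.
  exact: (h z y x).
- by rewrite (val_inj e) eqxx in ne.
Qed.

Definition gap_index X y : 'I_n.+1 := inord (stdpos X y).

Lemma gap_indexE X y : gap_index X y = stdpos X y :> nat.
Proof. by rewrite /gap_index inordK // ltnS (leq_trans (stdpos_le_card X y)) ?card_le_ord. Qed.

Lemma mem_gap_index X y : y \notin X -> y \in gap X (gap_index X y).
Proof. by rewrite gap_indexE; apply: mem_gap_stdpos. Qed.

Lemma sum_card_gap X : \sum_(i <- iota 0 #|X|.+1) #|gap X i| = #|~: X|.
Proof.
rewrite -{1}(subn0 #|X|.+1) -/(index_iota _ _) big_mkord.
rewrite -(sum1_card [in ~: X]) (partition_big (fun y => (inord (stdpos X y) : 'I_#|X|.+1)) xpredT) //=.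
apply: eq_bigr => j _; rewrite -sum1_card; apply: eq_bigl => y.
rewrite !inE; congr (_ && _); apply/eqP/eqP => e.
  by apply: val_inj; rewrite /= inordK ?e // ltnS stdpos_le_card.
by rewrite -e inordK // ltnS stdpos_le_card.
Qed.

End Standardization.

Section Partitions.
Variable T : finType.
Implicit Types (Q : {set {set T}}) (D t : {set T}).

Definition partition_spec Q D : Prop :=
  [/\ forall t, t \in Q -> t != set0,
      forall t, t \in Q -> t \subset D,
      forall x, x \in D -> exists2 t, t \in Q & x \in t &
      forall t1 t2 x, t1 \in Q -> t2 \in Q -> x \in t1 -> x \in t2 -> t1 = t2].

Lemma partitionP Q D : reflect (partition_spec Q D) (partition Q D).
Proof.
apply: (iffP and3P) => [[/eqP cov /trivIsetP tI s0]|[h0 hs hc hu]]; split.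
- by move=> t tQ; apply: contraNneq s0 => <-.
- by move=> t tQ; rewrite -cov; exact: bigcup_sup.
- by move=> x; rewrite -cov => /bigcupP[t tQ xt]; exists t.
- move=> t1 t2 x t1Q t2Q x1 x2; apply/eqP; apply/negPn/negP => ne.
  have := tI _ _ t1Q t2Q ne; rewrite -setI_eq0 => /eqP/setP/(_ x).
  by rewrite !inE x1 x2.
- apply/eqP/setP => x; apply/bigcupP/idP => [[t tQ xt]|xD].
    exact: (subsetP (hs t tQ)).
  by have [t tQ xt] := hc x xD; exists t.
- apply/trivIsetP => A B AQ BQ ne; rewrite -setI_eq0; apply/eqP/setP => x.
  rewrite !inE; apply/negbTE/negP => /andP[xA xB].
  by move: ne; rewrite (hu A B x AQ BQ xA xB) eqxx.
- by apply/negP => /h0; rewrite eqxx.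
Qed.

Definition same_block Q (x y : T) := [exists t in Q, (x \in t) && (y \in t)].

Lemma eq_partition_same_block Q1 Q2 : partition Q1 setT -> partition Q2 setT ->
  same_block Q1 =2 same_block Q2 -> Q1 = Q2.
Proof.
suff sub : forall Q Q', partition Q setT -> partition Q' setT ->
    same_block Q =2 same_block Q' -> Q \subset Q'.
  by move=> p1 p2 h; apply/eqP; rewrite eqEsubset !sub // => x y; rewrite h.
move=> Q Q' /partitionP[q0 _ _ qu] /partitionP[_ _ qc' qu'] h.
apply/subsetP => t tQ; have /set0Pn[x xt] := q0 t tQ.
have [t' t'Q xt'] := qc' x (in_setT x).
suff -> : t = t' by [].
apply/setP => y; apply/idP/idP => [yt|yt'].
  have : same_block Q x y by apply/existsP; exists t; rewrite tQ xt yt.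
  rewrite h => /existsP[u /and3P[uQ xu yu]].
  by rewrite (qu' t' u x t'Q uQ xt' xu).
have : same_block Q' x y by apply/existsP; exists t'; rewrite t'Q xt' yt'.
rewrite -h => /existsP[u /and3P[uQ xu yu]].
by rewrite (qu t u x tQ uQ xt xu).
Qed.

End Partitions.

Lemma noncrossingP n (Q : {set {set 'I_n}}) :
  reflect (forall pi rho, pi \in Q -> rho \in Q -> pi != rho ->
            forall a b c d : 'I_n, a \in pi -> b \in pi -> c \in rho -> d \in rho ->
            a < c -> c < b -> b < d -> False)
          (noncrossing Q).
Proof.
apply: (iffP forallP) => [h pi rho piQ rhoQ ne a b c d ap bp cr dr ac cb bd|h pi].
  move: (h pi); rewrite piQ /= => /forallP/(_ rho); rewrite rhoQ ne /=.
  move/negP; apply; apply/existsP; exists a; apply/existsP; exists b.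
  by apply/existsP; exists c; apply/existsP; exists d; rewrite ap bp cr dr ac cb bd.
apply/implyP => piQ; apply/forallP => rho; apply/implyP => rhoQ; apply/implyP => ne.
apply/negP => /existsP[a /existsP[b /existsP[c /existsP[d]]]].
case/and5P => ap bp cr dr /and3P[ac cb bd].
exact: (h pi rho piQ rhoQ ne a b c d).
Qed.

Lemma noncrossing_sub n (Q Q' : {set {set 'I_n}}) :
  Q' \subset Q -> noncrossing Q -> noncrossing Q'.
Proof.
by move=> /subsetP sQ /noncrossingP h; apply/noncrossingP => pi rho /sQ piQ /sQ; apply: h.
Qed.

Lemma Conv_sub n (X Y : {set 'I_n}) : X \subset Y -> Conv X \subset Conv Y.
Proof.
move=> /subsetP XY; apply/subsetP => x; rewrite !inE.
case/existsP => a /andP[aX /existsP[b /andP[bX h]]].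
by apply/existsP; exists a; rewrite XY //=; apply/existsP; exists b; rewrite XY.
Qed.

(* [0 < a < x < b] would be a crossing. *)
Lemma noncrossing_first_block n (Q : {set {set 'I_n}}) t1 t2 (x0 x a b : 'I_n) :
  noncrossing Q -> t1 \in Q -> t2 \in Q -> t1 != t2 ->
  x0 \in t1 -> x0 = 0 :> nat -> x \in t1 -> a \in t2 -> b \in t2 ->
  a < x -> x < b -> x0 \notin t2 -> False.
Proof.
move=> /noncrossingP h t1Q t2Q ne x01 x00 x1 a2 b2 ax xb x02.
apply: (h t1 t2 t1Q t2Q ne x0 x a b x01 x1 a2 b2) => //.
rewrite x00 lt0n; apply: contraNneq x02 => a0.
by rewrite (_ : x0 = a) //; apply: val_inj; rewrite /= a0 x00.
Qed.

Lemma noncrossing_first_block_Conv n (Q : {set {set 'I_n}}) t1 t2 (x0 c : 'I_n) :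
  noncrossing Q -> t1 \in Q -> t2 \in Q -> t1 != t2 ->
  x0 \in t1 -> x0 = 0 :> nat -> c \in t1 -> c \in Conv t2 -> c \notin t2 ->
  x0 \notin t2 -> False.
Proof.
move=> nQ t1Q t2Q ne x01 x00 c1.
rewrite inE => /existsP[a /andP[a2 /existsP[b /andP[b2 /andP[ac cb]]]]] c2.
apply: (noncrossing_first_block nQ t1Q t2Q ne x01 x00 c1 a2 b2).
  by rewrite ltn_neqAle ac andbT; apply: contraNneq c2 => /val_inj <-.
by rewrite ltn_neqAle cb andbT; apply: contraNneq c2 => /val_inj ->.
Qed.

Section Standardize.
Variables (n : nat) (Y : {set 'I_n}).
Implicit Types (t : {set 'I_n}) (b : {set 'I_#|Y|}).

Definition std t : {set 'I_#|Y|} := [set i : 'I_#|Y| | [exists x in t, stdpos Y x == i]].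
Definition unstd b : {set 'I_n} := [set y in Y | [exists i in b, stdpos Y y == i]].

Definition std_ord (y : 'I_n) (yY : y \in Y) : 'I_#|Y| := Ordinal (stdpos_lt_card yY).

Lemma std_ord_onto (i : 'I_#|Y|) : exists y, exists yY : y \in Y, std_ord yY = i.
Proof.
have [y yY e] := stdpos_onto (ltn_ord i).
by exists y, yY; apply: val_inj.
Qed.

Lemma std_ordE (y : 'I_n) (yY : y \in Y) : std_ord yY = stdpos Y y :> nat.
Proof. by []. Qed.

Lemma mem_unstd b (y : 'I_n) (yY : y \in Y) : (y \in unstd b) = (std_ord yY \in b).
Proof.
rewrite inE yY /=; apply/existsP/idP => [[i /andP[ib /eqP e]]|h].
  by rewrite (_ : std_ord yY = i) //; apply: val_inj.
by exists (std_ord yY); rewrite h /=.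
Qed.

Lemma unstd_sub b : unstd b \subset Y.
Proof. by apply/subsetP => y; rewrite inE => /andP[]. Qed.

Lemma mem_std t (i : 'I_#|Y|) : (i \in std t) = [exists x in t, stdpos Y x == i].
Proof. by rewrite inE. Qed.

Lemma unstdK : cancel unstd std.
Proof.
move=> b; apply/setP => i; rewrite mem_std.
apply/existsP/idP => [[x /andP[xb /eqP e]]|ib].
  have xY := subsetP (unstd_sub b) x xb.
  by move: xb; rewrite (mem_unstd _ xY) (_ : std_ord xY = i) //; apply: val_inj.
have [x [xY e]] := std_ord_onto i.
by exists x; rewrite (mem_unstd _ xY) e ib -e /= eqxx.
Qed.

Lemma stdK t : t \subset Y -> unstd (std t) = t.
Proof.
move=> tY; apply/setP => y; apply/idP/idP => [yl|yt].
  have yY := subsetP (unstd_sub _) y yl.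
  move: yl; rewrite (mem_unstd _ yY) mem_std => /existsP[x /andP[xt /eqP e]].
  by rewrite -(stdpos_inj (subsetP tY x xt) yY e).
have yY := subsetP tY y yt.
by rewrite (mem_unstd _ yY) mem_std; apply/existsP; exists y; rewrite yt eqxx.
Qed.

Lemma unstd_inj : injective unstd.
Proof. exact: can_inj unstdK. Qed.

Lemma std_subset t t' : t \subset t' -> std t \subset std t'.
Proof.
move=> /subsetP st; apply/subsetP => i; rewrite !mem_std => /existsP[x /andP[xs e]].
by apply/existsP; exists x; rewrite st.
Qed.

Lemma unstd_subset b b' : (unstd b \subset unstd b') = (b \subset b').
Proof.
apply/idP/idP => [/std_subset|/subsetP bb']; first by rewrite !unstdK.
apply/subsetP => y yb; have yY := subsetP (unstd_sub _) y yb.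
by move: yb; rewrite !(mem_unstd _ yY) => /bb'.
Qed.

Lemma unstd0 : unstd set0 = set0.
Proof. by apply/setP => y; rewrite !inE; case: (y \in Y) => //=; apply/existsP => [[i]]; rewrite inE. Qed.

Lemma unstd_eq0 b : (unstd b == set0) = (b == set0).
Proof. by rewrite -unstd0 (inj_eq unstd_inj). Qed.

Lemma stdpos_unstd b (x : 'I_n) (xY : x \in Y) :
  stdpos (unstd b) x = stdpos b (std_ord xY).
Proof.
apply: (@card_inj_nat _ _ _ _ (stdpos Y) val).
- by move=> a c; rewrite !inE => /andP[/andP[aY _] _] /andP[/andP[cY _] _]; apply: stdpos_inj.
- by move=> a c _ _; apply: val_inj.
move=> k; split => [[z]|[j]].
  rewrite inE => /andP[zb zx] <-.
  have zY := subsetP (unstd_sub _) z zb.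
  exists (std_ord zY) => //.
  by rewrite inE -(mem_unstd _ zY) zb /= ltn_stdposE.
rewrite inE => /andP[jb jx] <-.
have [z [zY ej]] := std_ord_onto j; subst j.
exists z => //; rewrite inE (mem_unstd _ zY) jb /=.
by rewrite -(ltn_stdposE zY xY).
Qed.

Lemma card_unstd b : #|unstd b| = #|b|.
Proof.
apply: (@card_inj_nat _ _ _ _ (stdpos Y) val).
- by move=> a c al cl; apply: stdpos_inj; apply: (subsetP (unstd_sub b)).
- by move=> a c _ _; apply: val_inj.
move=> k; split => [[z zb <-]|[j jb <-]].
  have zY := subsetP (unstd_sub _) z zb.
  by exists (std_ord zY) => //; rewrite -(mem_unstd _ zY).
have [z [zY e]] := std_ord_onto j.
by exists z; [rewrite (mem_unstd _ zY) e | rewrite -e].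
Qed.

Lemma partition_unstd (A : {set {set 'I_#|Y|}}) :
  partition A setT = partition (unstd @: A) Y.
Proof.
apply/partitionP/partitionP => [[h0 _ hc hu]|[h0 hs hc hu]]; split.
- by move=> t /imsetP[b bA ->]; rewrite unstd_eq0 h0.
- by move=> t /imsetP[b bA ->]; exact: unstd_sub.
- move=> y yY; have [b bA ib] := hc (std_ord yY) (in_setT _).
  by exists (unstd b); [apply: imset_f | rewrite (mem_unstd _ yY)].
- move=> t1 t2 y /imsetP[b1 b1A ->] /imsetP[b2 b2A ->] y1 y2.
  have yY := subsetP (unstd_sub _) y y1.
  rewrite !(mem_unstd _ yY) in y1 y2.
  by rewrite (hu b1 b2 (std_ord yY) b1A b2A y1 y2).
- by move=> b bA; rewrite -unstd_eq0 h0 // imset_f.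
- by move=> b _; apply/subsetP => i; rewrite inE.
- move=> i _; have [y [yY <-]] := std_ord_onto i.
  have [t /imsetP[b bA ->] yt] := hc y yY.
  by exists b => //; rewrite -(mem_unstd _ yY).
- move=> b1 b2 i b1A b2A i1 i2; have [y [yY ei]] := std_ord_onto i.
  apply: unstd_inj; apply: (hu _ _ y); rewrite ?imset_f // (mem_unstd _ yY) ei //.
Qed.

Lemma noncrossing_unstd (A : {set {set 'I_#|Y|}}) :
  noncrossing A = noncrossing (unstd @: A).
Proof.
apply/noncrossingP/noncrossingP => h.
  move=> pi rho /imsetP[b1 b1A ->] /imsetP[b2 b2A ->] ne a b c d ap bp cr dr ac cb bd.
  have [aY bY] := (subsetP (unstd_sub _) a ap, subsetP (unstd_sub _) b bp).
  have [cY dY] := (subsetP (unstd_sub _) c cr, subsetP (unstd_sub _) d dr).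
  rewrite ?(mem_unstd _ aY) ?(mem_unstd _ bY) ?(mem_unstd _ cY) ?(mem_unstd _ dY) in ap bp cr dr.
  apply: (h b1 b2 b1A b2A _ _ _ _ _ ap bp cr dr); rewrite ?std_ordE ?ltn_stdposE //.
  by apply: contra ne => /eqP ->.
move=> b1 b2 b1A b2A ne ia ib ic id ap bp cr dr ac cb bd.
have [a [aY ea]] := std_ord_onto ia; have [b [bY eb]] := std_ord_onto ib.
have [c [cY ec]] := std_ord_onto ic; have [d [dY ed]] := std_ord_onto id.
apply: (h (unstd b1) (unstd b2) _ _ _ a b c d); rewrite ?imset_f ?(inj_eq unstd_inj) //.
- by rewrite (mem_unstd _ aY) ea.
- by rewrite (mem_unstd _ bY) eb.
- by rewrite (mem_unstd _ cY) ec.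
- by rewrite (mem_unstd _ dY) ed.
- by rewrite -(ltn_stdposE aY cY) -!std_ordE ea ec.
- by rewrite -(ltn_stdposE cY bY) -!std_ordE ec eb.
- by rewrite -(ltn_stdposE bY dY) -!std_ordE eb ed.
Qed.

End Standardize.
Arguments unstd {n} Y b.
Arguments std {n} Y t.

Section Restriction.
Variable n : nat.
Implicit Types (P : {set {set 'I_n}}) (X : {set 'I_n}).

Definition trace P X := [set pi :&: X | pi in P & pi :&: X != set0].

Lemma restrE P X : restr P X = std X @: trace P X.
Proof. by rewrite /restr /trace -imset_comp. Qed.

Lemma trace_sub P X t : t \in trace P X -> t \subset X.
Proof. by case/imsetP => pi _ ->; apply: subsetIr. Qed.

Lemma unstd_restr P X : unstd X @: restr P X = trace P X.
Proof.
rewrite restrE -imset_comp -[RHS]imset_id; apply: eq_in_imset => t tT /=.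
by rewrite stdK // (trace_sub tT).
Qed.

Lemma partition_trace P X : partition P setT -> partition (trace P X) X.
Proof.
move=> /partitionP[h0 _ hc hu]; apply/partitionP; split.
- by move=> t; case/imsetP => pi; rewrite inE => /andP[_ ne] ->.
- by move=> t /trace_sub.
- move=> x xX; have [pi piP xpi] := hc x (in_setT x).
  exists (pi :&: X); last by rewrite inE xpi.
  by apply: imset_f; rewrite inE piP; apply/set0Pn; exists x; rewrite inE xpi.
- move=> t1 t2 x /imsetP[p1 + ->] /imsetP[p2 + ->].
  rewrite !inE => /andP[p1P _] /andP[p2P _] /andP[x1 _] /andP[x2 _].
  by rewrite (hu p1 p2 x p1P p2P x1 x2).
Qed.

Lemma noncrossing_trace P X : noncrossing P -> noncrossing (trace P X).
Proof.
move=> /noncrossingP h; apply/noncrossingP.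
move=> t1 t2 /imsetP[p1 + ->] /imsetP[p2 + ->] ne a b c d.
rewrite !inE => /andP[p1P _] /andP[p2P _] /andP[ap _] /andP[bp _] /andP[cp _] /andP[dp _].
apply: (h p1 p2 p1P p2P _ a b c d ap bp cp dp).
by apply: contra ne => /eqP ->.
Qed.

Lemma partition_restr P X : partition P setT -> partition (restr P X) setT.
Proof. by move=> pP; rewrite partition_unstd unstd_restr partition_trace. Qed.

Lemma ncpart_restr P X : ncpart P -> ncpart (restr P X).
Proof.
case/andP => pP nP.
by rewrite /ncpart partition_restr // noncrossing_unstd unstd_restr noncrossing_trace.
Qed.

Lemma card_restr P X : partition P setT ->
  #|restr P X| = #|[set pi in P | pi :&: X != set0]|.
Proof.
move=> /partitionP[_ _ _ hu]; rewrite /restr card_in_imset // => p1 p2.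
rewrite !inE => /andP[p1P ne1] /andP[p2P ne2] e.
have {}e : p1 :&: X = p2 :&: X.
  by rewrite -(stdK (subsetIr p1 X)) -(stdK (subsetIr p2 X)); congr unstd; exact: e.
case/set0Pn: ne1 => x; rewrite e !inE => /andP[x2 xX].
have : x \in p1 :&: X by rewrite e inE x2 xX.
by rewrite inE => /andP[x1 _]; apply: (hu _ _ x).
Qed.

Lemma same_block_restr P X (i j : 'I_#|X|) :
  same_block (restr P X) i j =
  [exists x in X, exists y in X, [&& stdpos X x == i, stdpos X y == j & same_block P x y]].
Proof.
apply/existsP/existsP => [[b /and3P[bR ib jb]]|].
  move: bR; rewrite restrE => /imsetP[t /imsetP[pi]]; rewrite inE => /andP[piP _] -> ebt.
  move: ib jb; rewrite ebt !mem_std => /existsP[x /andP[]]; rewrite inE => /andP[xp xX] ei.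
  move=> /existsP[y /andP[]]; rewrite inE => /andP[yp yX] ej.
  exists x; rewrite xX /=; apply/existsP; exists y; rewrite yX ei ej /=.
  by apply/existsP; exists pi; rewrite piP xp yp.
case=> x /andP[xX /existsP[y /andP[yX /and3P[ei ej /existsP[pi /and3P[piP xp yp]]]]]].
exists (std X (pi :&: X)); apply/and3P; split.
- rewrite restrE; apply: imset_f; apply: imset_f; rewrite inE piP /=.
  by apply/set0Pn; exists x; rewrite inE xp xX.
- by rewrite mem_std; apply/existsP; exists x; rewrite inE xp xX ei.
- by rewrite mem_std; apply/existsP; exists y; rewrite inE yp yX ej.
Qed.

End Restriction.

Notation tagP := (Tagged (fun k => {set {set 'I_k}})).

Lemma eq_tagP m1 m2 (A : {set {set 'I_m1}}) (B : {set {set 'I_m2}}) :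
  m1 = m2 -> partition A setT -> partition B setT ->
  (forall (i j : 'I_m1) (i' j' : 'I_m2), i = i' :> nat -> j = j' :> nat ->
      same_block A i j = same_block B i' j') ->
  tagP A = tagP B.
Proof.
move=> e; subst m2 => pA pB h; congr Tagged.
by apply: eq_partition_same_block => // i j; apply: h.
Qed.

Lemma restr_setT n (P : {set {set 'I_n}}) : partition P setT -> tagP (restr P setT) = tagP P.
Proof.
move=> pP; apply: eq_tagP; rewrite ?partition_restr ?cardsT ?card_ord //.
move=> i j i' j' ei ej; rewrite same_block_restr.
apply/existsP/idP => [[x /andP[_ /existsP[y /andP[_ /and3P[/eqP xi /eqP yj s]]]]]|s].
  rewrite stdpos_setT in xi; rewrite stdpos_setT in yj.
  have -> : i' = x by apply: val_inj; rewrite /= -ei xi.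
  by have -> : j' = y by apply: val_inj; rewrite /= -ej yj.
exists i'; rewrite inE /=; apply/existsP; exists j'; rewrite inE /= !stdpos_setT.
by rewrite -ei -ej !eqxx.
Qed.

Lemma restr_restr n (P : {set {set 'I_n}}) (Y : {set 'I_n}) (t : {set 'I_#|Y|}) :
  partition P setT -> tagP (restr (restr P Y) t) = tagP (restr P (unstd Y t)).
Proof.
move=> pP; have pY := partition_restr Y pP.
apply: eq_tagP; rewrite ?card_unstd ?partition_restr //.
move=> i j i' j' ei ej; rewrite !same_block_restr.
apply/existsP/existsP.
  case=> a /andP[at_ /existsP[b /andP[bt /and3P[/eqP ai /eqP bj]]]].
  rewrite same_block_restr => /existsP[x /andP[xY /existsP[y /andP[yY /and3P[/eqP xa /eqP yb s]]]]].
  have xa' : std_ord xY = a by apply: val_inj.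
  have yb' : std_ord yY = b by apply: val_inj.
  exists x; rewrite (mem_unstd _ xY) xa' at_ /=; apply/existsP; exists y.
  rewrite (mem_unstd _ yY) yb' bt /= s !stdpos_unstd xa' yb' andbT.
  by rewrite ai bj ei ej !eqxx.
case=> x /andP[xl /existsP[y /andP[yl /and3P[/eqP xi /eqP yj s]]]].
have xY := subsetP (unstd_sub t) x xl; have yY := subsetP (unstd_sub t) y yl.
rewrite (mem_unstd _ xY) in xl; rewrite (mem_unstd _ yY) in yl.
exists (std_ord xY); rewrite xl /=; apply/existsP; exists (std_ord yY); rewrite yl /=.
rewrite -!stdpos_unstd xi yj ei ej !eqxx /= same_block_restr.
apply/existsP; exists x; rewrite xY /=; apply/existsP; exists y.
by rewrite yY s !eqxx.
Qed.

Definition weight (w : seq NCP) : nat := \sum_(q <- w) ncp_n q.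

Lemma weight_cat u v : weight (u ++ v) = weight u + weight v.
Proof. by rewrite /weight big_cat. Qed.

Lemma weight_cons p w : weight (p :: w) = ncp_n p + weight w.
Proof. by rewrite /weight big_cons. Qed.

Lemma big_seq_of_opt (R : Type) (idx : R) (op : Monoid.law idx) (F : NCP -> R) o :
  \big[op/idx]_(q <- seq_of_opt o) F q = oapp F idx o.
Proof. by case: o => [q|] /=; rewrite ?big_seq1 ?big_nil. Qed.

Lemma weight_pmap (T : Type) (f : T -> option NCP) s :
  weight (pmap f s) = \sum_(i <- s) weight (seq_of_opt (f i)).
Proof. by rewrite /weight big_pmap; apply: eq_bigr => i _; rewrite big_seq_of_opt. Qed.

Lemma ncp_gt0 (p : NCP) : 0 < ncp_n p.
Proof. by case/andP: (valP p). Qed.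

Lemma ncp_ncpart (p : NCP) : ncpart (ncp_P p).
Proof. by case/andP: (valP p). Qed.

Lemma ncp_partition (p : NCP) : partition (ncp_P p) setT.
Proof. by case/andP: (ncp_ncpart p). Qed.

Lemma ncp_noncrossing (p : NCP) : noncrossing (ncp_P p).
Proof. by case/andP: (ncp_ncpart p). Qed.

Lemma ncp_tagP (p : NCP) : tagP (ncp_P p) = val p.
Proof. by rewrite /ncp_P /ncp_n; case: (val p). Qed.

Lemma isNCP_restr n (P : {set {set 'I_n}}) (X : {set 'I_n}) : ncpart P -> 0 < #|X| -> isNCP (tagP (restr P X)).
Proof. by move=> nP X0; rewrite /isNCP /= X0 ncpart_restr. Qed.

Lemma toNCP_restr n (P : {set {set 'I_n}}) (X : {set 'I_n}) (nP : ncpart P) (X0 : 0 < #|X|) :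
  toNCP (restr P X) = Some (Sub (tagP (restr P X)) (isNCP_restr nP X0)).
Proof. exact: insubT. Qed.

Lemma toNCP_restr0 n (P : {set {set 'I_n}}) (X : {set 'I_n}) : #|X| = 0 -> toNCP (restr P X) = None.
Proof. by move=> X0; rewrite /toNCP insubF // /isNCP /= (_ : 0 < #|X| = false) // X0. Qed.

Lemma toNCP_restr_setT (p : NCP) : toNCP (restr (ncp_P p) setT) = Some p.
Proof. by rewrite /toNCP restr_setT ?ncp_partition // ncp_tagP valK. Qed.

Lemma weight_restr n (P : {set {set 'I_n}}) (X : {set 'I_n}) : ncpart P ->
  weight (seq_of_opt (toNCP (restr P X))) = #|X|.
Proof.
move=> nP; have [X0|X0] := posnP #|X|; first by rewrite toNCP_restr0 // X0 /weight big_nil.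
by rewrite (toNCP_restr nP X0) /weight /= big_cons big_nil addn0.
Qed.

Section Cuts.
Variable n : nat.
Implicit Types (P L : {set {set 'I_n}}).

Definition lowersets0 P := [set L | lowerset P L && [exists pi in L, exists x in pi, x == 0 :> nat]].

Lemma lowerset_closed P L : L \subset P ->
  (forall s t, t \in L -> arrow0 P s t -> s \in L) -> lowerset P L.
Proof.
move=> LP h; rewrite /lowerset LP /=; apply/forallP => t; apply/implyP => tL.
apply/forallP => s; apply/implyP => sP; apply/implyP => /connectP[q].
elim: q s {sP} => [|y q IH] s /=; first by move=> _ e; rewrite e in tL.
by case/andP => sy pq e; apply: (h s y) => //; exact: IH pq e.
Qed.

Lemma lowerset0 P : lowerset P set0.
Proof. by rewrite /lowerset sub0set; apply/forallP => pi; rewrite inE. Qed.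

Lemma mem_unionL L x : (x \in unionL L) = [exists pi in L, x \in pi].
Proof. by apply/bigcupP/existsP => [[pi piL xp]|[pi /andP[piL xp]]]; exists pi => //; rewrite piL. Qed.

Lemma unionL_gt0 P L : partition P setT -> L \subset P -> L != set0 -> 0 < #|unionL L|.
Proof.
move=> /partitionP[h0 _ _ _] LP /set0Pn[pi piL].
have /set0Pn[x xp] := h0 pi (subsetP LP pi piL).
by apply/card_gt0P; exists x; apply/bigcupP; exists pi.
Qed.

Lemma blocks_meeting_unionL P L : partition P setT -> L \subset P ->
  [set pi in P | pi :&: unionL L != set0] = L.
Proof.
move=> /partitionP[h0 _ _ hu] LP; apply/setP => pi; rewrite inE.
apply/andP/idP => [[piP /set0Pn[x]]|piL].
  rewrite inE => /andP[xp /bigcupP[p' p'L xp']].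
  by rewrite (hu pi p' x piP (subsetP LP _ p'L) xp xp').
split; first exact: subsetP LP _ piL.
have /set0Pn[x xp] := h0 pi (subsetP LP _ piL).
by apply/set0Pn; exists x; rewrite inE xp; apply/bigcupP; exists pi.
Qed.

Lemma lowersets0_sub P L : L \in lowersets0 P -> L \subset P.
Proof. by rewrite inE => /andP[/andP[]]. Qed.

Lemma lowersets0_neq0 P L : L \in lowersets0 P -> L != set0.
Proof. by rewrite inE => /andP[_ /existsP[pi /andP[piL _]]]; apply/set0Pn; exists pi. Qed.

Lemma cut_L_neq_nil P L : ncpart P -> L \subset P -> L != set0 -> cut_L P L != [::].
Proof.
move=> nP LP ne; have pP : partition P setT by case/andP: nP.
by rewrite /cut_L (toNCP_restr nP (unionL_gt0 pP LP ne)).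
Qed.

Lemma cut_L_set0 P : cut_L P set0 = [::].
Proof. by rewrite /cut_L toNCP_restr0 // /unionL big_set0 cards0. Qed.

Lemma weight_cut_Ubar P L : ncpart P -> weight (cut_Ubar P L) = n - #|unionL L|.
Proof.
move=> nP; rewrite /cut_Ubar weight_pmap -cardsC_ord -sum_card_gap.
by apply: eq_bigr => i _; apply: weight_restr.
Qed.

End Cuts.

Lemma cuts1E (p : NCP) :
  cuts1 p = [seq (cut_L (ncp_P p) L, cut_Ubar (ncp_P p) L) | L <- enum (lowersets0 (ncp_P p))].
Proof. by []. Qed.

Lemma cut_Ubar_set0 (p : NCP) : cut_Ubar (ncp_P p) set0 = [:: p].
Proof. by rewrite /cut_Ubar /unionL big_set0 cards0 /= gap_set0 toNCP_restr_setT. Qed.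

Lemma sum_cuts_lower_nil (R : nzRingType) (p : NCP) (H : seq NCP * seq NCP -> R) :
  (forall c, c.1 != [::] -> H c = 0%R) -> (\sum_(c <- cuts p) H c)%R = H ([::], [:: p]).
Proof.
move=> H0; rewrite /cuts big_map big_enum /= (bigD1 set0) /=; last by rewrite inE lowerset0.
rewrite cut_L_set0 cut_Ubar_set0 big1 ?addr0 // => L.
rewrite inE => /andP[/andP[LP _] ne]; apply: H0.
exact: cut_L_neq_nil (ncp_ncpart p) LP ne.
Qed.

Lemma sum_allcuts_lower_nil (R : nzRingType) (w : seq NCP) (G : seq NCP * seq NCP -> R) :
  (forall d, d.1 != [::] -> G d = 0%R) -> (\sum_(d <- allcuts w) G d)%R = G ([::], w).
Proof.
elim: w G => [|p w IH] G G0 /=; first by rewrite big_cons big_nil addr0.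
rewrite big_allpairs_dep /=.
rewrite (eq_bigr (fun c => G (c.1, c.2 ++ w))); last first.
  move=> c _; rewrite (IH (fun d => G (c.1 ++ d.1, c.2 ++ d.2))) ?cats0 //.
  by move=> d /= ne; apply: G0 => /=; case: (c.1) => //.
by rewrite (@sum_cuts_lower_nil _ p (fun c => G (c.1, c.2 ++ w))) // => c ne; apply: G0.
Qed.

Lemma mem_cuts1 (p : NCP) c : c \in cuts1 p -> c.1 != [::] /\ weight c.2 < ncp_n p.
Proof.
rewrite cuts1E => /mapP[L]; rewrite mem_enum => LS ->.
have [LP ne] := (lowersets0_sub LS, lowersets0_neq0 LS).
split; first exact: cut_L_neq_nil (ncp_ncpart p) LP ne.
rewrite /= weight_cut_Ubar ?ncp_ncpart // ltn_subrL ncp_gt0 andbT.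
exact: unionL_gt0 (ncp_partition p) LP ne.
Qed.

Lemma weight_allcuts w d : d \in allcuts w -> weight d.2 <= weight w.
Proof.
elim: w d => [|p w IH] d /=; first by rewrite inE => /eqP ->.
case/allpairsPdep => c [d' [/mapP[L _ ->] /IH le ->]] /=.
by rewrite weight_cat weight_cons leq_add // weight_cut_Ubar ?ncp_ncpart ?leq_subr.
Qed.

Section HalfShuffle.
Variable R : fieldType.
Local Open Scope ring_scope.

Lemma eq_halfprec_weight (k f g : seq NCP -> R) w :
  (forall u, (weight u < weight w)%N -> f u = g u) -> halfprec k f w = halfprec k g w.
Proof.
case: w => [|p w] //= h; rewrite !big_seq; apply: eq_bigr => c cin.
rewrite !big_seq; apply: eq_bigr => d din; congr (_ * _); apply: h.
rewrite weight_cat weight_cons -addSn leq_add ?weight_allcuts //.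
exact: (mem_cuts1 cin).2.
Qed.

Lemma halfprec_fixpoint_unique (k f g : seq NCP -> R) :
  (forall w, f w = eps R w + halfprec k f w) ->
  (forall w, g w = eps R w + halfprec k g w) ->
  f =1 g.
Proof.
move=> hf hg w; have [m] := ubnP (weight w); elim: m w => // m IH w lt.
rewrite hf hg; congr (_ + _); apply: eq_halfprec_weight => u lu.
by apply: IH; apply: leq_trans lu _.
Qed.

End HalfShuffle.

Lemma lowersets0_block0 (p : NCP) (x0 : 'I_(ncp_n p)) pi0 :
  x0 = 0 :> nat -> pi0 \in ncp_P p -> x0 \in pi0 -> [set pi0] \in lowersets0 (ncp_P p).
Proof.
move=> x00 pi0P x0p; have /partitionP[_ _ _ hu] := ncp_partition p.
rewrite inE; apply/andP; split; last first.
  by apply/existsP; exists pi0; rewrite inE eqxx /=; apply/existsP; exists x0; rewrite x0p x00.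
apply: lowerset_closed; first by rewrite sub1set.
move=> s t; rewrite inE => /eqP -> /and3P[sP _ /set0Pn[c]]; rewrite inE => /andP[cs cp].
rewrite inE; apply/eqP/eqP/negPn/negP => ne.
have ne' : pi0 != s by rewrite eq_sym.
apply: (noncrossing_first_block_Conv (ncp_noncrossing p) pi0P sP ne' x0p x00 cp cs).
  by apply/negP => cs'; move: ne; rewrite (hu s pi0 c sP pi0P cs' cp) eqxx.
by apply/negP => xs; move: ne; rewrite (hu s pi0 x0 sP pi0P xs x0p) eqxx.
Qed.

Lemma einf_cut_L (R : fieldType) (p : NCP) L : L \in lowersets0 (ncp_P p) ->
  einf R (cut_L (ncp_P p) L) = (#|L| == 1%N)%:R%R.
Proof.
move=> LS; have [LP ne] := (lowersets0_sub LS, lowersets0_neq0 LS).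
rewrite /cut_L (toNCP_restr (ncp_ncpart p) (unionL_gt0 (ncp_partition p) LP ne)) /=.
by rewrite card_restr ?ncp_partition // blocks_meeting_unionL ?ncp_partition.
Qed.

(* The only cut whose lower part is a single block is the block containing 0. *)
Lemma sum_einf_cut_L (R : fieldType) (p : NCP) :
  (\sum_(L in lowersets0 (ncp_P p)) einf R (cut_L (ncp_P p) L))%R = 1%R.
Proof.
pose x0 : 'I_(ncp_n p) := Ordinal (ncp_gt0 p).
have /partitionP[_ _ hc hu] := ncp_partition p.
have [pi0 pi0P x0p] := hc x0 (in_setT _).
have S0 := @lowersets0_block0 p x0 pi0 erefl pi0P x0p.
rewrite (bigD1 [set pi0]) //= einf_cut_L // cards1 eqxx big1 ?addr0 // => L /andP[LS ne].
rewrite einf_cut_L //; case: cards1P => [[pi epi]|//].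
have piP : pi \in ncp_P p by move: (lowersets0_sub LS); rewrite epi sub1set.
move: (LS); rewrite epi inE => /andP[_ /existsP[t /andP[]]].
rewrite inE => /eqP -> /existsP[x /andP[xp /eqP x_0]].
have ex : x = x0 by apply: val_inj.
by move/negP: ne; case; rewrite epi (hu pi pi0 x0 piP pi0P _ x0p) // -ex.
Qed.

Lemma halfprec_einf_fixpoint_one (R : fieldType) (psi : seq NCP -> R) :
  (forall w, psi w = (eps R w + halfprec (@einf R) psi w)%R) -> psi =1 (fun=> 1%R).
Proof.
move=> h w; have [m] := ubnP (weight w); elim: m w => // m IH [|p w] lt.
  by rewrite h /= addr0.
rewrite h /= add0r.
transitivity (\sum_(c <- cuts1 p) einf R c.1)%R; last first.
  by rewrite cuts1E big_map big_enum /= sum_einf_cut_L.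
rewrite big_seq [RHS]big_seq; apply: eq_bigr => c cin.
have [c1 wc] := mem_cuts1 cin.
rewrite (@sum_allcuts_lower_nil _ w (fun d => einf R (c.1 ++ d.1) * psi (c.2 ++ d.2))%R).
  rewrite cats0 IH ?mulr1 // weight_cat; move: lt; rewrite ltnS; apply: leq_trans.
  by rewrite weight_cons -addSn leq_add2r.
move=> d; case: (c.1) c1 => // x s _; case: (d.1) => // y t _.
by case: s => [|? ?]; rewrite /= mul0r.
Qed.

Section CoarseningSums.
Variables (R : fieldType) (kappa : seq NCP -> R).
Local Open Scope ring_scope.

(* K(P|t), which is 1 when t is empty. *)
Definition kappa_on n (P : {set {set 'I_n}}) (t : {set 'I_n}) : R :=
  \prod_(q <- seq_of_opt (toNCP (restr P t))) kappa [:: q].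

Definition refines_on n (P : {set {set 'I_n}}) (D : {set 'I_n}) (Q : {set {set 'I_n}}) :=
  [forall pi in P, (pi :&: D != set0) ==> [exists t in Q, pi :&: D \subset t]].

Definition nc_coarsenings n (P : {set {set 'I_n}}) (D : {set 'I_n}) : {set {set {set 'I_n}}} :=
  [set Q | [&& partition Q D, noncrossing Q & refines_on P D Q]].

Definition coarse_sum n (P : {set {set 'I_n}}) (D : {set 'I_n}) : R :=
  \sum_(Q in nc_coarsenings P D) \prod_(t in Q) kappa_on P t.

Definition coarsen_sum (p : NCP) : R := \sum_(c <- coarsen p) charB kappa c.2.

Lemma charB_cat u v : charB kappa (u ++ v) = charB kappa u * charB kappa v.
Proof. by rewrite /charB big_cat. Qed.

Lemma coact_one (psi : seq NCP -> R) : psi =1 (fun=> 1) ->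
  forall w, coact psi (charB kappa) w = \prod_(q <- w) coarsen_sum q.
Proof.
move=> h1; elim => [|p w IH].
  by rewrite /coact big_cons big_nil h1 /charB !big_nil mulr1 addr0.
rewrite /coact /= big_allpairs_dep big_cons /= -IH /coarsen_sum big_distrl /=.
apply: eq_bigr => c _; rewrite /coact big_distrr /=; apply: eq_bigr => d _.
by rewrite !h1 !mul1r charB_cat.
Qed.

Lemma nc_coarsenings_setT n (P : {set {set 'I_n}}) : partition P setT ->
  nc_coarsenings P setT = [set Q | ncpart Q && refines P Q].
Proof.
move=> /partitionP[h0 _ _ _]; apply/setP => Q; rewrite !inE /ncpart -andbA.
congr [&& _, _ & _]; apply/forallP/forallP => h pi; apply/implyP => piP;
  by move: (h pi); rewrite piP /= setIT h0.
Qed.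

Lemma coarsen_sumE (p : NCP) : coarsen_sum p = coarse_sum (ncp_P p) setT.
Proof.
rewrite /coarsen_sum /coarsen big_pmap /coarse_sum nc_coarsenings_setT ?ncp_partition // -big_enum /=.
rewrite big_seq [RHS]big_seq; apply: eq_bigr => Q; rewrite mem_enum inE => /andP[nQ _].
rewrite /toNCP insubT /=; first by rewrite /isNCP /= nQ ncp_gt0.
move=> _; rewrite /quotNC /charB big_pmap big_enum /=.
by apply: eq_bigr => t _; rewrite /kappa_on big_seq_of_opt.
Qed.

Lemma kappa_on_unstd n (P : {set {set 'I_n}}) (Y : {set 'I_n}) (t : {set 'I_#|Y|}) :
  partition P setT -> kappa_on (restr P Y) t = kappa_on P (unstd Y t).
Proof. by move=> pP; rewrite /kappa_on /toNCP restr_restr. Qed.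

Lemma nc_coarsenings_restr n (P : {set {set 'I_n}}) (Y : {set 'I_n}) : partition P setT ->
  nc_coarsenings P Y = (fun Q : {set {set 'I_#|Y|}} => unstd Y @: Q) @: nc_coarsenings (restr P Y) setT.
Proof.
move=> pP; apply/setP => Q; apply/idP/imsetP => [|[Q' Q'N ->]].
  rewrite inE => /and3P[pQ nQ rQ].
  have QY : forall t, t \in Q -> t \subset Y by case/partitionP: pQ.
  have eQ : unstd Y @: (std Y @: Q) = Q.
    rewrite -imset_comp -[RHS]imset_id; apply: eq_in_imset => t tQ /=.
    exact: stdK (QY t tQ).
  exists (std Y @: Q) => //; rewrite inE partition_unstd noncrossing_unstd eQ pQ nQ /=.
  apply/forallP => a; apply/implyP; rewrite restrE => /imsetP[t /imsetP[pi]].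
  rewrite inE => /andP[piP ne] -> ->; apply/implyP => _.
  move/forallP: rQ => /(_ pi); rewrite piP ne /= => /existsP[u /andP[uQ su]].
  by apply/existsP; exists (std Y u); rewrite imset_f //= setIT std_subset.
move: Q'N; rewrite !inE => /and3P[pQ nQ rQ].
rewrite -partition_unstd -noncrossing_unstd pQ nQ /=.
apply/forallP => pi; apply/implyP => piP; apply/implyP => ne.
have aA : std Y (pi :&: Y) \in restr P Y.
  by rewrite restrE; apply: imset_f; apply: imset_f; rewrite inE piP.
move/forallP: rQ => /(_ (std Y (pi :&: Y))); rewrite aA /= setIT.
rewrite -unstd_eq0 stdK ?subsetIr // ne /=.
move=> /existsP[t /andP[tQ st]]; apply/existsP; exists (unstd Y t).
by rewrite imset_f //= -(stdK (subsetIr pi Y)) unstd_subset.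
Qed.

Lemma coarse_sum_restr n (P : {set {set 'I_n}}) (Y : {set 'I_n}) : partition P setT ->
  coarse_sum (restr P Y) setT = coarse_sum P Y.
Proof.
move=> pP; rewrite /coarse_sum [in RHS](nc_coarsenings_restr Y pP) big_imset /=; last first.
  by move=> A B _ _; apply: imset_inj; apply: unstd_inj.
apply: eq_bigr => Q' _; rewrite big_imset /=; last by move=> a b _ _; apply: unstd_inj.
by apply: eq_bigr => t _; rewrite kappa_on_unstd.
Qed.

Lemma nc_coarsenings_set0 n (P : {set {set 'I_n}}) : nc_coarsenings P set0 = [set set0].
Proof.
apply/setP => Q; rewrite !inE; apply/idP/idP => [/and3P[/partitionP[h0 hs _ _] _ _]|/eqP ->].
  apply/eqP/setP => t; rewrite inE; apply/negbTE/negP => tQ.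
  by move: (h0 t tQ) (hs t tQ); rewrite subset0 => /negbTE ->.
apply/and3P; split.
- by apply/partitionP; split => // [t|t|x|t1 t2 x]; rewrite ?inE.
- by apply/noncrossingP => pi rho; rewrite inE.
- by apply/forallP => pi; rewrite setI0 eqxx /= implybT.
Qed.

Lemma coarse_sum_set0 n (P : {set {set 'I_n}}) : coarse_sum P set0 = 1.
Proof. by rewrite /coarse_sum nc_coarsenings_set0 big_set1 big_set0. Qed.

Lemma prod_sum_coarsen_restr n (P : {set {set 'I_n}}) (Y : {set 'I_n}) : ncpart P ->
  \prod_(q <- seq_of_opt (toNCP (restr P Y))) coarsen_sum q = coarse_sum P Y.
Proof.
move=> nP; have pP : partition P setT by case/andP: nP.
have [Y0|Y0] := posnP #|Y|.
  by rewrite toNCP_restr0 // (cards0_eq Y0) coarse_sum_set0 big_nil.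
by rewrite (toNCP_restr nP Y0) big_cons big_nil mulr1 coarsen_sumE /= coarse_sum_restr.
Qed.

End CoarseningSums.

Section RootDecomposition.
Variables (n : nat) (P : {set {set 'I_n}}) (x0 : 'I_n).
Hypotheses (pP : partition P setT) (x00 : x0 = 0 :> nat).
Implicit Types (x y : 'I_n) (pi t : {set 'I_n}) (Q L : {set {set 'I_n}}).

Lemma block_neq0 pi : pi \in P -> pi != set0.
Proof. by case/partitionP: pP => h _ _ _; apply: h. Qed.

Lemma block_cover x : exists2 pi, pi \in P & x \in pi.
Proof. by case/partitionP: pP => _ _ h _; apply: h. Qed.

Lemma block_uniq pi1 pi2 x : pi1 \in P -> pi2 \in P -> x \in pi1 -> x \in pi2 -> pi1 = pi2.
Proof. by case/partitionP: pP => _ _ _ h; apply: h. Qed.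

Lemma eq_x0 x : x = 0 :> nat -> x = x0.
Proof. by move=> e; apply: val_inj; rewrite /= e x00. Qed.

Definition root_lowerset (Q : {set {set 'I_n}}) :=
  [set pi in P | [exists t in Q, (x0 \in t) && (pi \subset t)]].

Section Coarsening.
Variable Q : {set {set 'I_n}}.
Hypothesis QN : Q \in nc_coarsenings P setT.

Lemma coarsening_partition : partition_spec Q setT.
Proof. by move: QN; rewrite inE => /and3P[/partitionP]. Qed.

Lemma coarsening_noncrossing : noncrossing Q.
Proof. by move: QN; rewrite inE => /and3P[]. Qed.

Lemma coarsening_refines pi : pi \in P -> exists2 t, t \in Q & pi \subset t.
Proof.
move: QN; rewrite inE => /and3P[_ _ /forallP/(_ pi)] + piP.
by rewrite piP setIT block_neq0 //= => /existsP[t /andP[]]; exists t.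
Qed.

Lemma coarsening_uniq t1 t2 x : t1 \in Q -> t2 \in Q -> x \in t1 -> x \in t2 -> t1 = t2.
Proof. by case: coarsening_partition => _ _ _; apply. Qed.

Lemma mem_root_lowerset t0 pi : t0 \in Q -> x0 \in t0 ->
  (pi \in root_lowerset Q) = (pi \in P) && (pi \subset t0).
Proof.
move=> t0Q x0t0; rewrite inE; congr (_ && _).
apply/existsP/idP => [[t /and3P[tQ x0t pit]]|pit]; last by exists t0; rewrite t0Q x0t0.
by rewrite -(coarsening_uniq tQ t0Q x0t x0t0).
Qed.

Lemma root_lowerset_lowersets0 : root_lowerset Q \in lowersets0 P.
Proof.
have [_ _ cover _] := coarsening_partition.
have [t0 t0Q x0t0] := cover x0 (in_setT _).
have inLQ := mem_root_lowerset _ t0Q x0t0.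
rewrite inE; apply/andP; split.
  apply: lowerset_closed => [|s t]; first by apply/subsetP => pi; rewrite inLQ => /andP[].
  rewrite !inLQ => /andP[tP tt0] /and3P[sP _ /set0Pn[c]].
  rewrite inE sP => /andP[cs /(subsetP tt0) ct0] /=.
  have [u uQ su] := coarsening_refines sP.
  have [->//|ne] := eqVneq t0 u.
  have notin_u y : y \in t0 -> y \notin u.
    by move=> yt0; apply: contra ne => yu; rewrite (coarsening_uniq t0Q uQ yt0 yu).
  case: (noncrossing_first_block_Conv coarsening_noncrossing t0Q uQ ne x0t0 x00 ct0
         (subsetP (Conv_sub su) c cs) (notin_u c ct0) (notin_u x0 x0t0)).
have [pi piP x0p] := block_cover x0; have [u uQ pu] := coarsening_refines piP.
rewrite -(coarsening_uniq uQ t0Q (subsetP pu x0 x0p) x0t0) in inLQ.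
by apply/existsP; exists pi; rewrite inLQ piP pu /=; apply/existsP; exists x0; rewrite x0p x00.
Qed.

End Coarsening.

Section GapFamilies.
Variable L : {set {set 'I_n}}.
Hypothesis LS : L \in lowersets0 P.
Local Notation X := (unionL L).

Lemma sub_unionL pi : pi \in L -> pi \subset X.
Proof. by move=> piL; apply/subsetP => y yp; apply/bigcupP; exists pi. Qed.

Lemma x0_unionL : x0 \in X.
Proof.
move: LS; rewrite inE => /andP[_ /existsP[pi /andP[piL /existsP[x /andP[xp /eqP x_0]]]]].
by rewrite -(eq_x0 x_0); exact: (subsetP (sub_unionL piL)).
Qed.

Lemma lowerset_arrow0 s t : s \in P -> t \in L -> arrow0 P s t -> s \in L.
Proof.
move=> sP tL st; have : lowerset P L by move: LS; rewrite inE => /andP[].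
case/andP=> _ /forallP/(_ t).
by rewrite tL /= => /forallP/(_ s); rewrite sP /= => /implyP; apply; apply: connect1.
Qed.

Lemma notin_unionL pi y : pi \in P -> pi \notin L -> y \in pi -> y \notin X.
Proof.
move=> piP piL yp; rewrite mem_unionL; apply/negP => /existsP[p' /andP[p'L yp']].
by move: piL; rewrite (block_uniq piP (subsetP (lowersets0_sub LS) _ p'L) yp yp') p'L.
Qed.

(* If a block outside [L] straddled a point of [X], its hull would meet a block of [L]. *)
Lemma block_sub_gap pi y : pi \in P -> pi \notin L -> y \in pi ->
  pi \subset gap X (stdpos X y).
Proof.
move=> piP piL yp; apply: sub_gap => // [z|a b x ap bp]; first exact: notin_unionL.
rewrite mem_unionL => /existsP[p' /andP[p'L xp']] ax xb.
suff : arrow0 P pi p' by move/(lowerset_arrow0 piP p'L); rewrite (negbTE piL).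
rewrite /arrow0 piP (subsetP (lowersets0_sub LS) _ p'L) /=; apply/set0Pn; exists x.
rewrite !inE xp' andbT; apply/existsP; exists a; rewrite ap /=.
by apply/existsP; exists b; rewrite bp ltnW // ltnW.
Qed.

Definition gap_families :=
  [set f : {ffun 'I_n.+1 -> {set {set 'I_n}}} | [forall i, f i \in nc_coarsenings P (gap X i)]].

Definition glue (f : {ffun 'I_n.+1 -> {set {set 'I_n}}}) := X |: \bigcup_i f i.

Section GapFamily.
Variable f : {ffun 'I_n.+1 -> {set {set 'I_n}}}.
Hypothesis fF : f \in gap_families.

Lemma gap_familyP i : f i \in nc_coarsenings P (gap X i).
Proof. by move: fF; rewrite inE => /forallP. Qed.

Lemma gap_family_partition i : partition_spec (f i) (gap X i).
Proof. by move: (gap_familyP i); rewrite inE => /and3P[/partitionP]. Qed.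

Lemma gap_family_block i t : t \in f i -> t != set0 /\ t \subset gap X i.
Proof. by have [h0 hs _ _] := gap_family_partition i; split; [apply: h0 | apply: hs]. Qed.

Lemma unionL_not_sub_gap i : ~~ (X \subset gap X i).
Proof. by apply/negP => /subsetP/(_ x0 x0_unionL); rewrite in_gap x0_unionL. Qed.

Lemma mem_glue t : t \in glue f -> t = X \/ exists i, t \in f i.
Proof. by case/setU1P => [->|/bigcupP[i _ ti]]; [left | right; exists i]. Qed.

Lemma gap_family_glue i : f i = [set t in glue f | t \subset gap X i].
Proof.
apply/setP => t; rewrite inE; apply/idP/andP => [ti|[tG tg]].
  by split; [apply/setU1P; right; apply/bigcupP; exists i | case: (gap_family_block ti)].
case: (mem_glue tG) => [et|[j tj]]; first by move: tg; rewrite et (negbTE (unionL_not_sub_gap i)).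
have [/set0Pn[y yt] tg'] := gap_family_block tj.
by rewrite (val_inj (gap_uniq (subsetP tg y yt) (subsetP tg' y yt))).
Qed.

Lemma gap_family_disjoint i j : i != j -> [disjoint f i & f j].
Proof.
move=> ne; rewrite -setI_eq0; apply/eqP/setP => t; rewrite !inE.
apply/negbTE/negP => /andP[ti tj].
have [/set0Pn[y yt] tg] := gap_family_block ti; have [_ tg'] := gap_family_block tj.
by move: ne; rewrite (val_inj (gap_uniq (subsetP tg y yt) (subsetP tg' y yt))) eqxx.
Qed.

Lemma unionL_notin_gap_family : X \notin \bigcup_i f i.
Proof.
apply/negP => /bigcupP[i _ Xi].
by have [_ /negP] := gap_family_block Xi; rewrite (negbTE (unionL_not_sub_gap i)).
Qed.

Lemma prod_glue (R : comPzRingType) (g : {set 'I_n} -> R) :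
  (\prod_(t in glue f) g t = g X * \prod_i \prod_(t in f i) g t)%R.
Proof.
rewrite /glue big_setU1 ?unionL_notin_gap_family //=; congr (_ * _)%R.
exact: partition_disjoint_bigcup gap_family_disjoint.
Qed.

Lemma partition_glue : partition (glue f) setT.
Proof.
apply/partitionP; split.
- move=> t /mem_glue[->|[i ti]]; last by case: (gap_family_block ti).
  by apply/set0Pn; exists x0; exact: x0_unionL.
- by move=> t _; apply: subsetT.
- move=> y _; have [yX|yX] := boolP (y \in X); first by exists X => //; apply: setU11.
  have [_ _ hc _] := gap_family_partition (gap_index X y).
  have [t ti yt] := hc y (mem_gap_index yX).
  by exists t => //; apply/setU1P; right; apply/bigcupP; exists (gap_index X y).
move=> t1 t2 y /mem_glue[->|[i t1i]] /mem_glue[->|[j t2j]] y1 y2 //.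
- have [_ /subsetP tg] := gap_family_block t2j.
  by move: (gap_notin (tg y y2)); rewrite y1.
- have [_ /subsetP tg] := gap_family_block t1i.
  by move: (gap_notin (tg y y1)); rewrite y2.
have [_ /subsetP tg1] := gap_family_block t1i; have [_ /subsetP tg2] := gap_family_block t2j.
move: t2j; rewrite -(val_inj (gap_uniq (tg1 y y1) (tg2 y y2))) => t2i.
by have [_ _ _ hu] := gap_family_partition i; apply: (hu _ _ y).
Qed.

Lemma noncrossing_glue : noncrossing (glue f).
Proof.
apply/noncrossingP => pi rho /mem_glue[->|[i pii]] /mem_glue[->|[j rhoj]] ne a b c d ap bp cr dr ac cb bd.
- by rewrite eqxx in ne.
- have [_ /subsetP tg] := gap_family_block rhoj.
  exact: (gap_nothing_between (tg c cr) (tg d dr) bp cb bd).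
- have [_ /subsetP tg] := gap_family_block pii.
  exact: (gap_nothing_between (tg a ap) (tg b bp) cr ac cb).
have [_ /subsetP tg1] := gap_family_block pii; have [_ /subsetP tg2] := gap_family_block rhoj.
have eij : i = j by apply: val_inj; apply: (gap_between_gap (tg1 a ap) (tg1 b bp) (tg2 c cr) ac cb).
move: rhoj; rewrite -eij => rhoi.
have := gap_familyP i; rewrite inE => /and3P[_ /noncrossingP h _].
exact: (h pi rho pii rhoi ne a b c d ap bp cr dr ac cb bd).
Qed.

Lemma refines_glue : refines_on P setT (glue f).
Proof.
apply/forallP => pi; apply/implyP => piP; apply/implyP => _; rewrite setIT.
have [piL|piL] := boolP (pi \in L).
  by apply/existsP; exists X; rewrite setU11 sub_unionL.
have /set0Pn[y yp] := block_neq0 piP.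
have pg := block_sub_gap piP piL yp; rewrite -gap_indexE in pg.
have := gap_familyP (gap_index X y); rewrite inE => /and3P[_ _ /forallP/(_ pi)].
rewrite piP /= (setIidPl pg) (block_neq0 piP) /=.
case/existsP => t /andP[ti st]; apply/existsP; exists t; rewrite st andbT.
by apply/setU1P; right; apply/bigcupP; exists (gap_index X y).
Qed.

Lemma glue_nc_coarsenings : glue f \in nc_coarsenings P setT.
Proof. by rewrite inE partition_glue noncrossing_glue refines_glue. Qed.

Lemma root_lowerset_glue : root_lowerset (glue f) = L.
Proof.
have XG : X \in glue f by apply: setU11.
apply/setP => pi; rewrite (mem_root_lowerset glue_nc_coarsenings _ XG x0_unionL).
apply/andP/idP => [[piP piX]|piL]; last by rewrite (subsetP (lowersets0_sub LS)) ?sub_unionL.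
apply: contraT => piL; have /set0Pn[y yp] := block_neq0 piP.
by move: (notin_unionL piP piL yp); rewrite (subsetP piX y yp).
Qed.

End GapFamily.

Lemma glue_inj : {in gap_families &, injective glue}.
Proof.
move=> f1 f2 f1F f2F e; apply/ffunP => i.
by rewrite (gap_family_glue f1F) (gap_family_glue f2F) e.
Qed.


Section Unglue.
Variable Q : {set {set 'I_n}}.
Hypotheses (QN : Q \in nc_coarsenings P setT) (QL : root_lowerset Q = L).

Lemma unionL_root_block t0 : t0 \in Q -> x0 \in t0 -> X = t0.
Proof.
move=> t0Q x0t0; have inLQ := mem_root_lowerset QN _ t0Q x0t0.
apply/setP => y; apply/idP/idP => [|yt].
  by rewrite mem_unionL => /existsP[pi /andP[]]; rewrite -QL inLQ => /andP[_ /subsetP]; apply.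
have [pi piP yp] := block_cover y; have [t tQ pit] := coarsening_refines QN piP.
have et : t = t0 by apply: (coarsening_uniq QN tQ t0Q (subsetP pit y yp) yt).
by apply/bigcupP; exists pi; rewrite // -QL inLQ piP -et.
Qed.

Lemma unionL_in_coarsening : X \in Q.
Proof.
have [_ _ cover _] := coarsening_partition QN.
by have [t0 t0Q x0t0] := cover x0 (in_setT _); rewrite (unionL_root_block t0Q x0t0).
Qed.

Lemma coarsening_block_sub_gap t y : t \in Q -> t != X -> y \in t ->
  t \subset gap X (stdpos X y).
Proof.
move=> tQ ne yt.
have notinX z : z \in t -> z \notin X.
  by move=> zt; apply: contra ne => zX; rewrite (coarsening_uniq QN tQ unionL_in_coarsening zt zX).
apply: sub_gap => // a b x at_ bt xX ax xb; rewrite eq_sym in ne.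
exact: (noncrossing_first_block (coarsening_noncrossing QN) unionL_in_coarsening tQ ne
         x0_unionL x00 xX at_ bt ax xb (contraL (notinX x0) x0_unionL)).
Qed.

Definition unglue : {ffun 'I_n.+1 -> {set {set 'I_n}}} :=
  [ffun i : 'I_n.+1 => [set t in Q | t \subset gap X i]].

Lemma unglue_gap_families : unglue \in gap_families.
Proof.
have [q0 _ qc qu] := coarsening_partition QN.
have blockE t y : t \in Q -> y \notin X -> y \in t -> t \subset gap X (stdpos X y).
  by move=> tQ yX yt; apply: coarsening_block_sub_gap => //; apply: contraTneq yt => ->.
rewrite inE; apply/forallP => i; rewrite inE ffunE; apply/and3P; split.
- apply/partitionP; split.
  + by move=> t; rewrite inE => /andP[tQ _]; apply: q0.
  + by move=> t; rewrite inE => /andP[].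
  + move=> y yg; have [t tQ yt] := qc y (in_setT _).
    by exists t => //; rewrite inE tQ /=; move: yg; rewrite in_gap => /andP[yX /eqP <-]; apply: blockE.
  + by move=> t1 t2 y; rewrite !inE => /andP[t1Q _] /andP[t2Q _]; apply: qu.
- by apply: noncrossing_sub (coarsening_noncrossing QN); apply/subsetP => t; rewrite inE => /andP[].
apply/forallP => pi; apply/implyP => piP; apply/implyP => /set0Pn[y].
rewrite inE => /andP[yp yg]; have [t tQ pit] := coarsening_refines QN piP.
apply/existsP; exists t; have yt := subsetP pit y yp.
move: yg; rewrite in_gap => /andP[yX /eqP <-].
by rewrite inE tQ blockE //= (subset_trans _ pit) ?subsetIl.
Qed.

Lemma glue_unglue : glue unglue = Q.
Proof.
apply/setP => t; apply/idP/idP => [tG|tQ].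
  by case: (mem_glue tG) => [->|[i]]; [exact: unionL_in_coarsening | rewrite ffunE inE => /andP[]].
have [->|ne] := eqVneq t X; first exact: setU11.
have [q0 _ _ _] := coarsening_partition QN; have /set0Pn[y yt] := q0 t tQ.
apply/setU1P; right; apply/bigcupP; exists (gap_index X y) => //.
by rewrite ffunE inE tQ gap_indexE coarsening_block_sub_gap.
Qed.

End Unglue.

End GapFamilies.

(* A noncrossing coarsening of [P] is its block through [0], the union of a lowerset
   [L], glued to noncrossing coarsenings of the gaps of [L]. *)
Lemma sum_nc_coarsenings_root (R : comPzRingType) (g : {set 'I_n} -> R) :
  (\sum_(Q in nc_coarsenings P setT) \prod_(t in Q) g t =
   \sum_(L in lowersets0 P) g (unionL L) *
      \prod_(i : 'I_n.+1) \sum_(Q in nc_coarsenings P (gap (unionL L) i)) \prod_(t in Q) g t)%R.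
Proof.
rewrite (partition_big root_lowerset (mem (lowersets0 P))) /=; last first.
  by move=> Q QN; exact: root_lowerset_lowersets0.
apply: eq_bigr => L LS; rewrite bigA_distr_big_dep mulr_sumr.
rewrite (eq_bigl (fun f => f \in gap_families L)); last first.
  by move=> f; rewrite [RHS]inE; apply/familyP/forallP.
rewrite (eq_bigr (fun f => \prod_(t in glue L f) g t)%R); last first.
  by move=> f fF; rewrite prod_glue.
rewrite -(big_imset (fun Q => \prod_(t in Q) g t)%R (@glue_inj L LS)) /=.
apply: eq_bigl => Q; apply/andP/idP => [[QN /eqP QL]|/imsetP[f fF ->]].
  by apply/imsetP; exists (unglue L Q); rewrite ?unglue_gap_families ?glue_unglue.
by rewrite glue_nc_coarsenings // root_lowerset_glue.
Qed.

End RootDecomposition.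

Lemma big_iota_ord (R : Type) (idx : R) (op : Monoid.law idx) m n (F : nat -> R) :
  m <= n -> (forall i, m < i -> F i = idx) ->
  \big[op/idx]_(i <- iota 0 m.+1) F i = \big[op/idx]_(i < n.+1) F i.
Proof.
move=> mn F1; rewrite -(big_mkord xpredT F) -{1}(subn0 m.+1) -/(index_iota _ _).
rewrite (big_cat_nat _ (n := m.+1) (p := n.+1)) //= [X in _ = op _ X]big_nat_cond.
by rewrite [X in _ = op _ X]big1 ?Monoid.mulm1 // => i /andP[/andP[+ _] _]; apply: F1.
Qed.

Section Solution.
Variables (R : fieldType) (kappa : seq NCP -> R).
Local Open Scope ring_scope.

Lemma coarsen_sum_cuts1 (p : NCP) : coarsen_sum kappa p =
  \sum_(c <- cuts1 p) kappa c.1 * \prod_(q <- c.2) coarsen_sum kappa q.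
Proof.
pose x0 : 'I_(ncp_n p) := Ordinal (ncp_gt0 p).
have [pP nP] := (ncp_partition p, ncp_ncpart p).
rewrite coarsen_sumE /coarse_sum (@sum_nc_coarsenings_root _ _ x0 pP erefl _ (kappa_on kappa (ncp_P p))).
rewrite cuts1E big_map big_enum /=; apply: eq_bigr => L LS; congr (_ * _).
  have X0 := unionL_gt0 pP (lowersets0_sub LS) (lowersets0_neq0 LS).
  by rewrite /cut_L /kappa_on (toNCP_restr nP X0) /= big_seq1.
rewrite /cut_Ubar big_pmap.
rewrite -(big_iota_ord _ (m := #|unionL L|) (F := coarse_sum kappa (ncp_P p) \o gap (unionL L))) ?card_le_ord //; last first.
  by move=> i lt; rewrite /= gap_gt_card // coarse_sum_set0.
apply: eq_bigr => i _; rewrite /= -(prod_sum_coarsen_restr kappa _ nP).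
by rewrite big_seq_of_opt.
Qed.

Lemma coact_fixpoint (psi : seq NCP -> R) : psi =1 (fun=> 1) -> is_infchar kappa ->
  forall w, coact psi (charB kappa) w = eps R w + halfprec kappa (coact psi (charB kappa)) w.
Proof.
move=> h1 [k0 kc]; have cp := coact_one kappa h1.
case => [|p w]; first by rewrite cp big_nil /= addr0.
rewrite /= add0r cp big_cons coarsen_sum_cuts1 big_distrl /=.
rewrite big_seq [RHS]big_seq; apply: eq_bigr => c cin.
have [c1 _] := mem_cuts1 cin.
rewrite (@sum_allcuts_lower_nil _ w (fun d => kappa (c.1 ++ d.1) * coact psi (charB kappa) (c.2 ++ d.2))).
  by rewrite cats0 cp big_cat /= mulrA.
move=> d /= ne; rewrite kc ?mul0r //; first by case: (c.1) c1.
by case: (d.1) ne.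
Qed.

End Solution.

Local Open Scope ring_scope.

Theorem mainTheorem12 (R : fieldType) (psi kappa phi : seq NCP -> R) :
  (forall w, psi w = eps R w + halfprec (@einf R) psi w) ->
  is_infchar kappa ->
  is_char phi ->
  ((forall w, phi w = eps R w + halfprec kappa phi w) <->
   (forall w, phi w = coact psi (charB kappa) w)).
Proof.
move=> hpsi kinf _.
have Ffix := coact_fixpoint (halfprec_einf_fixpoint_one hpsi) kinf.
split => [hphi|hphi]; first exact: halfprec_fixpoint_unique hphi Ffix.
move=> w; rewrite hphi Ffix; congr (_ + _).
by apply: eq_halfprec_weight => u _; rewrite hphi.
Qed.
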